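(* Let $H$ be an infinite-dimensional real Hilbert space. Then for every integer $m\ge1$ and every $\alpha\in(0,1/3]$, $$\tfrac12 m^{-\alpha/2}\le \gamma_m(\alpha,H)\le m^{-\alpha/2}.$$
   Context: A (symmetric) dictionary in $H$ is a set $\mathcal D$ of unit vectors with dense span and $g\in\mathcal D\Rightarrow -g\in\mathcal D$. $A_1(\mathcal D)$ is the closed convex hull of $\mathcal D$ and $\|f\|_{A_1(\mathcal D)}:=\inf\{M:f/M\in A_1(\mathcal D)\}$. Pure Greedy Algorithm (PGA): for $f\in H$ let $g(f)\in\mathcal D$ be an element maximizing $\langle f,g\rangle$ over $\mathcal D$ (assumed to exist); $f_0:=f$, $G_0(f,\mathcal D):=0$, $G_m(f,\mathcal D):=G_{m-1}(f,\mathcal D)+\langle f_{m-1},g(f_{m-1})\rangle g(f_{m-1})$, $f_m:=f-G_m(f,\mathcal D)$. For $\alpha\in(0,1]$, $$\gamma_m(\alpha,H):=\sup_{\{G_m(f,\mathcal D)\},f,\mathcal D}\frac{\|f-G_m(f,\mathcal D)\|}{\|f\|^{1-\alpha}\|f\|_{A_1(\mathcal D)}^{\alpha}},$$ supremum over all dictionaries $\mathcal D$, all $f\ne0$ with $\|f\|_{A_1(\mathcal D)}<\infty$, and all possible realizations of the PGA. *)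

From Stdlib Require Import Reals List.
From Coquelicot Require Import Coquelicot.
Open Scope R_scope.

Section Hilbert.
Context {H : ModuleSpace R_Ring}.
Variable ip : H -> H -> R.

Definition is_inner_product : Prop :=
  (forall x y, ip x y = ip y x) /\
  (forall x y z, ip (plus x y) z = ip x z + ip y z) /\
  (forall (a : R) x y, ip (scal a x) y = a * ip x y) /\
  (forall x, 0 <= ip x x) /\
  (forall x, ip x x = 0 -> x = zero).

Definition hnorm (x : H) : R := sqrt (ip x x).

Definition hcomplete : Prop :=
  forall u : nat -> H,
    (forall eps, 0 < eps -> exists N, forall n p, (N <= n)%nat -> (N <= p)%nat ->
        hnorm (minus (u n) (u p)) < eps) ->
    exists l, forall eps, 0 < eps -> exists N, forall n, (N <= n)%nat ->
        hnorm (minus (u n) l) < eps.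

Inductive in_span (P : H -> Prop) : H -> Prop :=
  | span_zero : in_span P zero
  | span_step : forall (a : R) g x, P g -> in_span P x ->
                in_span P (plus (scal a g) x).

Definition infinite_dim : Prop :=
  ~ exists l : list H, forall x, in_span (fun g => List.In g l) x.

Definition inf_dim_hilbert : Prop :=
  is_inner_product /\ hcomplete /\ infinite_dim.

Definition dictionary (D : H -> Prop) : Prop :=
  (forall g, D g -> hnorm g = 1) /\
  (forall g, D g -> D (opp g)) /\
  (forall f eps, 0 < eps -> exists x, in_span D x /\ hnorm (minus f x) < eps).

Definition conv_hull (D : H -> Prop) (x : H) : Prop :=
  exists l : list (R * H),
    List.Forall (fun p => 0 <= fst p /\ D (snd p)) l /\
    fold_right (fun p s => fst p + s) 0 l = 1 /\
    x = fold_right (fun p acc => plus (scal (fst p) (snd p)) acc) zero l.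

Definition A1 (D : H -> Prop) (x : H) : Prop :=
  forall eps, 0 < eps -> exists y, conv_hull D y /\ hnorm (minus x y) < eps.

Definition A1_scales (D : H -> Prop) (f : H) (M : R) : Prop :=
  0 < M /\ A1 D (scal (/ M) f).

Definition A1_finite (D : H -> Prop) (f : H) : Prop :=
  exists M, A1_scales D f M.

(** ||f||_{A_1(D)} = inf {M : f/M in A_1(D)} (meaningful when A1_finite) *)
Definition A1_norm (D : H -> Prop) (f : H) : R :=
  real (Glb_Rbar (A1_scales D f)).

(** A realization of the first m steps of the Pure Greedy Algorithm:
    g k is a maximizer of <f_k, .> over D and
    f_{k+1} = f_k - <f_k, g k> g k, with f_0 = f.
    Then G_m(f,D) = f - f_m, i.e. f - G_m(f,D) = fs m. *)
Definition pga_realization (m : nat) (D : H -> Prop) (f : H)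
    (g : nat -> H) (fs : nat -> H) : Prop :=
  fs 0%nat = f /\
  forall k, (k < m)%nat ->
    D (g k) /\
    (forall h, D h -> ip (fs k) h <= ip (fs k) (g k)) /\
    fs (S k) = minus (fs k) (scal (ip (fs k) (g k)) (g k)).

Definition gamma (m : nat) (alpha : R) : Rbar :=
  Lub_Rbar (fun r => exists (D : H -> Prop) (f : H) (g fs : nat -> H),
    dictionary D /\ f <> zero /\ A1_finite D f /\
    pga_realization m D f g fs /\
    r = hnorm (fs m) /
        (Rpower (hnorm f) (1 - alpha) * Rpower (A1_norm D f) alpha)).

End Hilbert.

From Pilot Require Import Defs.
From Stdlib Require Import Reals Lra Lia Psatz List Classical.
From Coquelicot Require Import Coquelicot.
Open Scope R_scope.

(* Write [a_k = ||f_k||^2], [r_k = <f_k, g_k>], [S_k = r_0 + ... + r_(k-1)] and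
   [B = ||f||_A1].  Since [f_k = f - sum_(j<k) r_j g_j] and the dictionary is symmetric,
   [a_k <= r_k (B + S_k)], while [a_(k+1) = a_k - r_k^2].  Hence [a_k (B + S_k)] is
   nonincreasing and [m a_m <= S_m (B + S_m)], which combine into [m a_m^3 <= (a_0 B)^2].
   Interpolating this with [a_m <= a_0] gives [||f_m|| <= m^(-alpha/2) ||f||^(1-alpha) B^alpha]
   precisely when [alpha <= 1/3].

   Take orthonormal [e_0, ..., e_(2m-1)] (Gram-Schmidt), [f = sum_i e_i] and
   the dictionary of the [+-e_i] together with all unit vectors orthogonal to them.  The
   greedy algorithm may remove [e_0, ..., e_(m-1)] one at a time, so [||f_m||^2 = m] while
   [||f||^2 = ||f||_A1 = 2m], and the ratio is [2^(-(1+alpha)/2) m^(-alpha/2)]. *)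

Lemma exp_le x y : x <= y -> exp x <= exp y.
Proof. intros [hlt | ->]; [left; apply exp_increasing | right]; auto. Qed.

Lemma ln_sqrt x : 0 < x -> ln (sqrt x) = ln x / 2.
Proof. intros hx. rewrite <- Rpower_sqrt by exact hx. unfold Rpower. rewrite ln_exp. field. Qed.

Lemma div_Rpower_mult_exp y z w p q : 0 < y ->
  y / (Rpower z p * Rpower w q) = exp (ln y - p * ln z - q * ln w).
Proof.
  intros hy. unfold Rpower, Rminus. rewrite <- (exp_ln y) at 1 by exact hy.
  rewrite !exp_plus, !exp_Ropp. field. split; apply Rgt_not_eq, exp_pos.
Qed.

Lemma sqrt_ratio_le_Rpower a a0 b x alpha :
  0 <= a <= a0 -> 0 <= b -> 0 < x -> x * a ^ 3 <= (a0 * b) ^ 2 -> 0 <= alpha <= 1 / 3 ->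
  sqrt a / (Rpower (sqrt a0) (1 - alpha) * Rpower b alpha) <= Rpower x (- alpha / 2).
Proof.
  intros [[ha | <-] haa0] hb hx hxab [hal0 hal1].
  2: { rewrite sqrt_0. unfold Rdiv. rewrite Rmult_0_l. left. apply exp_pos. }
  assert (hxa : 0 < x * a ^ 3) by (apply Rmult_lt_0_compat; [| apply pow_lt]; lra).
  assert (hb' : 0 < b) by (destruct hb as [hb | <-]; [exact hb | nra]).
  assert (hlog : ln x + 3 * ln a <= 2 * (ln a0 + ln b)).
  { apply ln_le in hxab; [| exact hxa].
    rewrite ln_mult, !ln_pow, ln_mult in hxab
      by (try apply pow_lt; try apply Rmult_lt_0_compat; lra).
    simpl INR in hxab. lra. }
  assert (ln a <= ln a0) by (apply ln_le; lra).
  rewrite div_Rpower_mult_exp by (apply sqrt_lt_R0; exact ha).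
  rewrite !ln_sqrt by lra. unfold Rpower. apply exp_le.
  (* in logarithms, the goal is [(1 - 3 alpha) (a <= a0) + alpha (x a^3 <= (a0 b)^2)] *)
  assert (0 <= (1 - 3 * alpha) * (ln a0 - ln a)) by (apply Rmult_le_pos; lra).
  assert (0 <= alpha * (2 * (ln a0 + ln b) - ln x - 3 * ln a)) by (apply Rmult_le_pos; lra).
  lra.
Qed.

Lemma half_Rpower_le_sqrt_ratio x alpha : 0 < x -> alpha <= 1 ->
  1 / 2 * Rpower x (- alpha / 2) <=
  sqrt x / (Rpower (sqrt (2 * x)) (1 - alpha) * Rpower (2 * x) alpha).
Proof.
  intros hx halpha.
  rewrite div_Rpower_mult_exp by (apply sqrt_lt_R0; exact hx).
  rewrite !ln_sqrt, ln_mult by lra. unfold Rpower.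
  replace (1 / 2) with (exp (- ln 2)) by (rewrite exp_Ropp, exp_ln; lra).
  rewrite <- exp_plus. apply exp_le.
  assert (0 <= (1 - alpha) * ln 2) by (apply Rmult_le_pos; pose proof ln_lt_2; lra).
  lra.
Qed.

Fixpoint sum_lt (c : nat -> R) (n : nat) : R :=
  match n with O => 0 | S n => sum_lt c n + c n end.

Lemma sum_lt_ext (c d : nat -> R) n :
  (forall j, (j < n)%nat -> c j = d j) -> sum_lt c n = sum_lt d n.
Proof.
  induction n as [|n IH]; intros hcd; simpl; [reflexivity|].
  rewrite (hcd n) by lia. rewrite IH; [reflexivity |]. intros j hj. apply hcd. lia.
Qed.

Lemma sum_lt_const a n : sum_lt (fun _ => a) n = INR n * a.
Proof. induction n as [|n IH]; simpl sum_lt; [simpl; ring | rewrite IH, S_INR; ring]. Qed.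

Lemma plus_minus_r {G : AbelianGroup} (x y : G) : plus (minus x y) y = x.
Proof. unfold minus. rewrite <- plus_assoc, plus_opp_l, plus_zero_r. reflexivity. Qed.

Lemma minus_eq_zero_eq {G : AbelianGroup} (x y : G) : minus x y = zero -> x = y.
Proof. intros h. rewrite <- (plus_minus_r x y), h, plus_zero_l. reflexivity. Qed.

Section InnerProductSpace.
Context {H : ModuleSpace R_Ring} (ip : H -> H -> R) (Hip : is_inner_product ip).

Lemma ip_sym x y : ip x y = ip y x. Proof. apply Hip. Qed.
Lemma ip_plusl x y z : ip (plus x y) z = ip x z + ip y z. Proof. apply Hip. Qed.
Lemma ip_scall (a : R) x y : ip (scal a x) y = a * ip x y. Proof. apply Hip. Qed.
Lemma ip_self_nonneg x : 0 <= ip x x. Proof. apply Hip. Qed.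
Lemma ip_self_eq0 x : ip x x = 0 -> x = zero. Proof. apply Hip. Qed.

Lemma ip_zerol y : ip zero y = 0.
Proof. rewrite <- (scal_zero_l (K := R_Ring) (zero : H)), ip_scall. apply Rmult_0_l. Qed.

Lemma ip_oppl x y : ip (opp x) y = - ip x y.
Proof.
  pose proof (ip_plusl (opp x) x y) as h. rewrite (plus_opp_l (G := H)), ip_zerol in h. lra.
Qed.

Lemma ip_minusl x y z : ip (minus x y) z = ip x z - ip y z.
Proof. unfold minus. rewrite ip_plusl, ip_oppl. ring. Qed.

Lemma ip_plusr x y z : ip z (plus x y) = ip z x + ip z y.
Proof. rewrite !(ip_sym z). apply ip_plusl. Qed.

Lemma ip_scalr (a : R) x y : ip y (scal a x) = a * ip y x.
Proof. rewrite !(ip_sym y). apply ip_scall. Qed.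

Lemma ip_oppr x y : ip y (opp x) = - ip y x.
Proof. rewrite !(ip_sym y). apply ip_oppl. Qed.

Lemma ip_minusr x y z : ip z (minus x y) = ip z x - ip z y.
Proof. rewrite !(ip_sym z). apply ip_minusl. Qed.

Lemma ip_self_pos x : x <> zero -> 0 < ip x x.
Proof.
  intros hx. destruct (ip_self_nonneg x) as [h | h]; [exact h |].
  exfalso. apply hx, ip_self_eq0. auto.
Qed.

Lemma ip_minus_scal_self u v (c : R) :
  ip (minus u (scal c v)) (minus u (scal c v)) = ip u u - 2 * c * ip u v + c ^ 2 * ip v v.
Proof. rewrite ip_minusl, !ip_minusr, !ip_scall, !ip_scalr, (ip_sym v u). ring. Qed.

Lemma hnorm_sqr x : hnorm ip x ^ 2 = ip x x.
Proof. apply pow2_sqrt, ip_self_nonneg. Qed.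

Lemma hnorm_minus_self x : hnorm ip (minus x x) = 0.
Proof. unfold hnorm. rewrite (minus_eq_zero (G := H)), ip_zerol. apply sqrt_0. Qed.

Lemma ip_young u v t : 0 < t -> 2 * ip u v <= t * ip u u + ip v v / t.
Proof.
  intros ht. pose proof (ip_self_nonneg (minus (scal t u) v)) as h.
  rewrite ip_minusl, !ip_minusr, !ip_scall, !ip_scalr, (ip_sym v u) in h.
  apply Rmult_le_reg_l with t; [exact ht |].
  replace (t * (t * ip u u + ip v v / t)) with (t * t * ip u u + ip v v) by (field; lra).
  lra.
Qed.

Definition normalize (w : H) : H := scal (/ hnorm ip w) w.

Lemma hnorm_pos w : w <> zero -> 0 < hnorm ip w.
Proof. intros hw. apply sqrt_lt_R0, ip_self_pos, hw. Qed.

Lemma ip_normalize_self w : w <> zero -> ip (normalize w) (normalize w) = 1.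
Proof.
  intros hw. pose proof (hnorm_pos w hw). unfold normalize.
  rewrite ip_scall, ip_scalr, <- hnorm_sqr. field. lra.
Qed.

Lemma hnorm_normalize w : w <> zero -> hnorm ip (normalize w) = 1.
Proof. intros hw. unfold hnorm at 1. rewrite ip_normalize_self by exact hw. apply sqrt_1. Qed.

Lemma scal_hnorm_normalize w : w <> zero -> scal (hnorm ip w) (normalize w) = w.
Proof.
  intros hw. pose proof (hnorm_pos w hw). unfold normalize.
  rewrite scal_assoc. change (mult _ _) with (hnorm ip w * / hnorm ip w).
  rewrite Rinv_r by lra. apply (scal_one (K := R_Ring)).
Qed.

Definition lincomb (l : list (R * H)) : H :=
  fold_right (fun p acc => plus (scal (fst p) (snd p)) acc) zero l.

Lemma ip_lincomb_l l y :
  ip (lincomb l) y = fold_right (fun p s => fst p * ip (snd p) y + s) 0 l.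
Proof.
  induction l as [|p l IH]; simpl; [apply ip_zerol |].
  rewrite ip_plusl, ip_scall, <- IH. reflexivity.
Qed.

Lemma ip_conv_hull_le D u y c :
  conv_hull D y -> (forall h, D h -> ip u h <= c) -> ip u y <= c.
Proof.
  intros [l [hl [hsum ->]]] hc. rewrite ip_sym. fold (lincomb l). rewrite ip_lincomb_l.
  enough (fold_right (fun p s => fst p * ip (snd p) u + s) 0 l <=
          c * fold_right (fun p s => fst p + s) 0 l) by (rewrite hsum in *; lra).
  clear hsum. induction hl as [|p l [hp hDp] _ IH]; simpl; [lra |].
  rewrite ip_sym. specialize (hc _ hDp). nra.
Qed.

Lemma ip_A1_le D u x c : Defs.A1 ip D x -> (forall h, D h -> ip u h <= c) -> ip u x <= c.
Proof.
  (* Young's inequality with weight [t] gives [<u, x - y> < eps/2] once [||x - y|| < t]. *)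
  intros hx hc. apply Rle_plus_epsilon. intros eps heps.
  pose proof (ip_self_nonneg u) as hu.
  set (t := eps / (ip u u + 1)).
  assert (ht : 0 < t) by (apply Rdiv_lt_0_compat; lra).
  destruct (hx t ht) as [y [hy hxy]].
  set (v := minus x y) in *.
  assert (hvv : ip v v / t < t).
  { apply Rlt_div_l; [exact ht |]. rewrite <- hnorm_sqr.
    pose proof (sqrt_pos (ip v v)). unfold hnorm in *. nra. }
  assert (heps_t : t * ip u u + t = eps) by (unfold t; field; lra).
  pose proof (ip_young u v t ht). pose proof (ip_conv_hull_le D u y c hy hc).
  rewrite <- (plus_minus_r x y), ip_plusr. fold v. lra.
Qed.

Lemma ip_A1_scales_le D u f M c :
  A1_scales ip D f M -> (forall h, D h -> ip u h <= c) -> ip u f <= c * M.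
Proof.
  intros [hM hA] hc. pose proof (ip_A1_le D u _ c hA hc) as h.
  rewrite ip_scalr in h.
  replace (ip u f) with (M * (/ M * ip u f)) by (field; lra). nra.
Qed.

Lemma A1_norm_finite D f :
  A1_finite ip D f -> Glb_Rbar (A1_scales ip D f) = Finite (A1_norm ip D f).
Proof.
  intros [M hM]. unfold A1_norm.
  destruct (Glb_Rbar_correct (A1_scales ip D f)) as [hlb hglb].
  assert (h0 : Rbar_le 0 (Glb_Rbar (A1_scales ip D f))).
  { apply hglb. intros x [hx _]. simpl. lra. }
  specialize (hlb M hM).
  destruct (Glb_Rbar (A1_scales ip D f)); simpl in *; easy.
Qed.

Lemma A1_norm_le D f M : A1_scales ip D f M -> A1_norm ip D f <= M.
Proof.
  intros hM. destruct (Glb_Rbar_correct (A1_scales ip D f)) as [hlb _].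
  rewrite A1_norm_finite in hlb by (exists M; exact hM). exact (hlb M hM).
Qed.

Lemma A1_norm_ge D f b :
  A1_finite ip D f -> (forall M, A1_scales ip D f M -> b <= M) -> b <= A1_norm ip D f.
Proof.
  intros hfin hb. destruct (Glb_Rbar_correct (A1_scales ip D f)) as [_ hglb].
  rewrite A1_norm_finite in hglb by exact hfin. exact (hglb b hb).
Qed.

Lemma A1_norm_nonneg D f : A1_finite ip D f -> 0 <= A1_norm ip D f.
Proof. intros hfin. apply A1_norm_ge; [exact hfin |]. intros M [hM _]. lra. Qed.

Lemma ip_le_A1_norm D u f c : A1_finite ip D f -> 0 <= c ->
  (forall h, D h -> ip u h <= c) -> ip u f <= c * A1_norm ip D f.
Proof.
  intros hfin [hc | <-] hD.
  - enough (h : ip u f / c <= A1_norm ip D f) by (apply Rle_div_l in h; lra).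
    apply A1_norm_ge; [exact hfin |]. intros M hM.
    apply Rle_div_l; [exact hc |]. rewrite Rmult_comm. exact (ip_A1_scales_le D u f M c hM hD).
  - destruct hfin as [M hM]. pose proof (ip_A1_scales_le D u f M 0 hM hD). lra.
Qed.

(** * Decay of the pure greedy algorithm *)

Section GreedyDecay.
Variables (D : H -> Prop) (f : H) (g fs : nat -> H) (m : nat).
Hypotheses (hD : dictionary ip D) (hfin : A1_finite ip D f)
  (hpga : pga_realization ip m D f g fs).

Let r k := ip (fs k) (g k).
Let a k := ip (fs k) (fs k).
Let B := A1_norm ip D f.
Let csum k := sum_lt r k.

Lemma ip_pga_residual_bound k h : (k < m)%nat -> D h -> - r k <= ip (fs k) h <= r k.
Proof.
  intros hk hh. destruct hD as [_ [hopp _]]. destruct hpga as [_ hstep].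
  destruct (hstep k hk) as [_ [hmax _]].
  pose proof (hmax _ (hopp _ hh)) as hneg. rewrite ip_oppr in hneg.
  unfold r. split; [lra | exact (hmax _ hh)].
Qed.

Lemma pga_coef_nonneg k : (k < m)%nat -> 0 <= r k.
Proof.
  intros hk. destruct hpga as [_ hstep]. destruct (hstep k hk) as [hg _].
  pose proof (ip_pga_residual_bound k _ hk hg). unfold r in *. lra.
Qed.

Lemma ip_pga_residual_le y c k : (k <= m)%nat -> 0 <= c -> (forall h, D h -> ip y h <= c) ->
  ip (fs k) y <= c * (B + csum k).
Proof.
  (* [fs k = f - sum_(j<k) r j * g j]: bound [<y, f>] by [A_1] duality and each
     [- <y, g j>] by the symmetry of [D]. *)
  intros hk hc hy. destruct hpga as [h0 hstep]. induction k as [|k IH].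
  - rewrite h0, ip_sym. unfold csum. simpl sum_lt. rewrite Rplus_0_r.
    apply ip_le_A1_norm; assumption.
  - destruct (hstep k) as [hg [_ ->]]; [lia |].
    destruct hD as [_ [hopp _]].
    pose proof (hy _ (hopp _ hg)) as hneg. rewrite ip_oppr, ip_sym in hneg.
    pose proof (pga_coef_nonneg k ltac:(lia)). specialize (IH ltac:(lia)).
    rewrite ip_minusl, ip_scall. unfold csum. simpl sum_lt. fold (csum k). fold (r k). nra.
Qed.

Lemma pga_residual_sq_le k : (k < m)%nat -> a k <= r k * (B + csum k).
Proof.
  intros hk. apply ip_pga_residual_le; [lia | apply pga_coef_nonneg, hk |].
  intros h hh. apply (ip_pga_residual_bound k h hk hh).
Qed.

Lemma pga_residual_sq_step k : (k < m)%nat -> a (S k) = a k - r k ^ 2.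
Proof.
  intros hk. destruct hD as [hunit _]. destruct hpga as [_ hstep].
  destruct (hstep k hk) as [hg [_ hfs]].
  unfold a. rewrite hfs, ip_minus_scal_self, <- (hnorm_sqr (g k)), hunit by exact hg.
  unfold r. ring.
Qed.

Lemma pga_residual_sq_antitone j k : (j <= k <= m)%nat -> a k <= a j /\ csum j <= csum k.
Proof.
  intros [hjk hkm]. induction hjk as [|k hjk IH]; [lra |].
  rewrite pga_residual_sq_step by lia. unfold csum at 2. simpl sum_lt. fold (csum k).
  pose proof (pga_coef_nonneg k ltac:(lia)). specialize (IH ltac:(lia)). nra.
Qed.

Lemma pga_energy_le k : (k <= m)%nat -> a k * (B + csum k) <= a 0%nat * B.
Proof.
  induction k as [|k IH]; intros hk; [unfold csum; simpl; lra |].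
  (* [(a_k - r_k^2) (B + S_k + r_k) <= a_k (B + S_k)] because [a_k <= r_k (B + S_k)] *)
  rewrite pga_residual_sq_step by lia. unfold csum. simpl sum_lt. fold (csum k).
  pose proof (pga_residual_sq_le k ltac:(lia)). pose proof (pga_coef_nonneg k ltac:(lia)).
  pose proof (ip_self_nonneg (fs k)). specialize (IH ltac:(lia)). fold (a k) in *. nra.
Qed.

Lemma pga_residual_sq_count k : (k <= m)%nat -> INR k * a m <= csum k * (B + csum m).
Proof.
  induction k as [|k IH]; intros hk; [unfold csum; simpl; lra |].
  (* each step contributes [a_m <= a_k <= r_k (B + S_k) <= r_k (B + S_m)] *)
  rewrite S_INR. unfold csum at 1. simpl sum_lt. fold (csum k).
  pose proof (pga_residual_sq_le k ltac:(lia)). pose proof (pga_coef_nonneg k ltac:(lia)).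
  destruct (pga_residual_sq_antitone k m ltac:(lia)). specialize (IH ltac:(lia)). nra.
Qed.

Lemma pga_residual_sq_decay : a m <= a 0%nat /\ INR m * a m ^ 3 <= (a 0%nat * B) ^ 2.
Proof.
  destruct (pga_residual_sq_antitone 0 m ltac:(lia)) as [ham hcsum].
  split; [exact ham |].
  pose proof (pga_energy_le m (le_n m)) as henergy.
  pose proof (pga_residual_sq_count m (le_n m)) as hcount.
  assert (hB : 0 <= B) by apply (A1_norm_nonneg D f hfin).
  assert (ham0 : 0 <= a m) by apply ip_self_nonneg.
  assert (hcsum0 : csum 0%nat = 0) by reflexivity.
  assert (hm : INR m * a m <= (B + csum m) ^ 2) by nra.
  replace (INR m * a m ^ 3) with (a m ^ 2 * (INR m * a m)) by ring.
  apply Rle_trans with ((a m * (B + csum m)) ^ 2); [nra |].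
  apply pow_incr. nra.
Qed.

Lemma pga_ratio_le alpha : (0 < m)%nat -> 0 <= alpha <= 1 / 3 ->
  hnorm ip (fs m) / (Rpower (hnorm ip f) (1 - alpha) * Rpower B alpha) <=
  Rpower (INR m) (- alpha / 2).
Proof.
  intros hm halpha. destruct pga_residual_sq_decay as [hdecr hdecay].
  destruct hpga as [h0 _]. unfold a in *. rewrite h0 in hdecr, hdecay.
  apply sqrt_ratio_le_Rpower; try assumption.
  - split; [apply ip_self_nonneg | exact hdecr].
  - apply (A1_norm_nonneg D f hfin).
  - apply lt_0_INR, hm.
Qed.

End GreedyDecay.

(** * Orthonormal systems *)

Definition orthonormal (e : nat -> H) (N : nat) : Prop :=
  forall i j, (i < N)%nat -> (j < N)%nat -> ip (e i) (e j) = if Nat.eqb i j then 1 else 0.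

Fixpoint terms (c : nat -> R) (e : nat -> H) (n : nat) : list (R * H) :=
  match n with O => nil | S n => (c n, e n) :: terms c e n end.

Lemma ip_lincomb_terms c e n y :
  ip (lincomb (terms c e n)) y = sum_lt (fun i => c i * ip (e i) y) n.
Proof.
  induction n as [|n IH]; simpl; [apply ip_zerol |].
  rewrite ip_plusl, ip_scall. fold (lincomb (terms c e n)). rewrite IH. ring.
Qed.

Lemma ip_lincomb_terms_basis e N c n j : orthonormal e N -> (n <= N)%nat -> (j < N)%nat ->
  ip (lincomb (terms c e n)) (e j) = if Nat.ltb j n then c j else 0.
Proof.
  intros he hn hj. induction n as [|n IH]; simpl; [apply ip_zerol |].
  rewrite ip_plusl, ip_scall, (he n j) by lia. fold (lincomb (terms c e n)). rewrite IH by lia.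
  destruct (Nat.eqb_spec n j), (Nat.ltb_spec j n), (Nat.ltb_spec j (S n)); subst; try lia; ring.
Qed.

Lemma in_span_lincomb_terms (P : H -> Prop) c e n :
  (forall i, (i < n)%nat -> P (e i)) -> in_span P (lincomb (terms c e n)).
Proof.
  induction n as [|n IH]; intros hP; [apply span_zero |].
  apply span_step; [apply hP; lia | apply IH; intros i hi; apply hP; lia].
Qed.

Lemma scal_lincomb_terms a c e n :
  scal a (lincomb (terms c e n)) = lincomb (terms (fun i => a * c i) e n).
Proof.
  induction n as [|n IH]; simpl; [apply scal_zero_r |].
  rewrite scal_distr_l, scal_assoc. fold (lincomb (terms c e n)). rewrite IH. reflexivity.
Qed.

Lemma fold_weights_terms c e n : fold_right (fun p s => fst p + s) 0 (terms c e n) = sum_lt c n.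
Proof. induction n as [|n IH]; simpl; [reflexivity | rewrite IH; ring]. Qed.

Lemma Forall_terms (P : R * H -> Prop) c e n :
  (forall i, (i < n)%nat -> P (c i, e i)) -> List.Forall P (terms c e n).
Proof.
  induction n as [|n IH]; intros hP; constructor; [apply hP; lia |].
  apply IH. intros i hi. apply hP. lia.
Qed.

Definition proj (e : nat -> H) (N : nat) (x : H) : H :=
  lincomb (terms (fun i => ip x (e i)) e N).

Lemma ip_minus_proj_basis e N x j : orthonormal e N -> (j < N)%nat ->
  ip (minus x (proj e N x)) (e j) = 0.
Proof.
  intros he hj. unfold proj. rewrite ip_minusl, (ip_lincomb_terms_basis e N) by auto.
  destruct (Nat.ltb_spec j N); [ring | lia].
Qed.

Lemma orthonormal_extend e N x : orthonormal e N -> minus x (proj e N x) <> zero ->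
  orthonormal (fun i => if Nat.eqb i N then normalize (minus x (proj e N x)) else e i) (S N).
Proof.
  intros he hw i j hi hj.
  destruct (Nat.eqb_spec i N), (Nat.eqb_spec j N), (Nat.eqb_spec i j); subst; try lia.
  - apply ip_normalize_self, hw.
  - unfold normalize. rewrite ip_scall, ip_minus_proj_basis by (auto; lia). ring.
  - unfold normalize. rewrite ip_scalr, ip_sym, ip_minus_proj_basis by (auto; lia). ring.
  - rewrite (he j j), Nat.eqb_refl by lia. reflexivity.
  - rewrite (he i j) by lia. destruct (Nat.eqb_spec i j); [lia | reflexivity].
Qed.

Lemma orthonormal_exists : @infinite_dim H -> forall N, exists e, orthonormal e N.
Proof.
  intros hinf N. induction N as [|N [e he]].
  - exists (fun _ => zero). intros i j hi. lia.
  - assert (hx : exists x, ~ in_span (fun g => In g (map e (seq 0 N))) x).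
    { apply not_all_ex_not. intros hall. apply hinf. exists (map e (seq 0 N)). exact hall. }
    destruct hx as [x hx].
    exists (fun i => if Nat.eqb i N then normalize (minus x (proj e N x)) else e i).
    apply orthonormal_extend; [exact he |]. intros hw. apply hx.
    rewrite (minus_eq_zero_eq x _ hw). apply in_span_lincomb_terms.
    intros i hi. apply in_map, in_seq. lia.
Qed.

Fixpoint residual_along (f : H) (g : nat -> H) (k : nat) : H :=
  match k with
  | O => f
  | S k => minus (residual_along f g k) (scal (ip (residual_along f g k) (g k)) (g k))
  end.

Lemma ip_residual_along_basis f e N k : orthonormal e N -> (k <= N)%nat -> forall i, (i < N)%nat ->
  ip (residual_along f e k) (e i) = if Nat.ltb i k then 0 else ip f (e i).
Proof.
  intros he hk. induction k as [|k IH]; intros i hi; [reflexivity |]. simpl residual_along.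
  rewrite ip_minusl, ip_scall, (he k i), !IH by lia.
  destruct (Nat.ltb_spec k k); [lia |].
  destruct (Nat.ltb_spec i k), (Nat.ltb_spec i (S k)), (Nat.eqb_spec k i); subst; try lia; ring.
Qed.

Lemma ip_residual_along_perp f e k h : (forall i, (i < k)%nat -> ip (e i) h = 0) ->
  ip (residual_along f e k) h = ip f h.
Proof.
  induction k as [|k IH]; intros hh; simpl; [reflexivity |].
  rewrite ip_minusl, ip_scall, hh, IH by (auto; intros; apply hh; lia). ring.
Qed.

Lemma ip_residual_along_self f e N k : orthonormal e N -> (k <= N)%nat ->
  (forall i, (i < k)%nat -> ip f (e i) = 1) ->
  ip (residual_along f e k) (residual_along f e k) = ip f f - INR k.
Proof.
  intros he. induction k as [|k IH]; intros hk hf; simpl residual_along; [simpl; ring |].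
  rewrite ip_minus_scal_self, IH by (intros; try apply hf; lia).
  rewrite (ip_residual_along_basis f e N k he), hf, (he k k), Nat.eqb_refl by lia.
  destruct (Nat.ltb_spec k k); [lia |]. rewrite S_INR. ring.
Qed.

(** * The extremal example *)

Section OrthonormalDictionary.
Variables (e : nat -> H) (N : nat).
Hypothesis he : orthonormal e N.

(* The unit vectors orthogonal to all [e i] make the span dense without ever being
   preferred by the greedy choice. *)
Definition ortho_dict (g : H) : Prop :=
  (exists i, (i < N)%nat /\ (g = e i \/ g = opp (e i))) \/
  (hnorm ip g = 1 /\ forall i, (i < N)%nat -> ip (e i) g = 0).

Lemma in_span_ortho_dict x : in_span ortho_dict x.
Proof.
  assert (hproj : in_span ortho_dict (proj e N x)).
  { apply in_span_lincomb_terms. intros i hi. left. exists i. auto. }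
  set (w := minus x (proj e N x)).
  destruct (classic (w = zero)) as [hw | hw].
  - rewrite (minus_eq_zero_eq x _ hw). exact hproj.
  - rewrite <- (plus_minus_r x (proj e N x)). fold w. rewrite <- (scal_hnorm_normalize w hw).
    apply span_step; [| exact hproj]. right. split; [apply hnorm_normalize, hw |].
    intros i hi. unfold normalize, w. rewrite ip_scalr, ip_sym, ip_minus_proj_basis by auto. ring.
Qed.

Lemma ortho_dict_dictionary : dictionary ip ortho_dict.
Proof.
  split; [| split].
  - intros g [[i [hi [-> | ->]]] | [hg _]]; [| | exact hg]; unfold hnorm.
    + rewrite (he i i), Nat.eqb_refl by exact hi. apply sqrt_1.
    + rewrite ip_oppl, ip_oppr, Ropp_involutive, (he i i), Nat.eqb_refl by exact hi. apply sqrt_1.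
  - intros g [[i [hi [-> | ->]]] | [hg hperp]].
    + left. exists i. auto.
    + left. exists i. rewrite opp_opp. auto.
    + right. split.
      * unfold hnorm in *. rewrite ip_oppl, ip_oppr, Ropp_involutive. exact hg.
      * intros i hi. rewrite ip_oppr, hperp by exact hi. ring.
  - intros x eps heps. exists x. split; [apply in_span_ortho_dict |].
    rewrite hnorm_minus_self. exact heps.
Qed.

Definition ones : H := lincomb (terms (fun _ => 1) e N).

Lemma ip_ones_basis i : (i < N)%nat -> ip ones (e i) = 1.
Proof.
  intros hi. unfold ones. rewrite (ip_lincomb_terms_basis e N) by auto.
  destruct (Nat.ltb_spec i N); [reflexivity | lia].
Qed.

Lemma ip_ones_perp h : (forall i, (i < N)%nat -> ip (e i) h = 0) -> ip ones h = 0.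
Proof.
  intros hh. unfold ones. rewrite ip_lincomb_terms, (sum_lt_ext _ (fun _ => 0)).
  - rewrite sum_lt_const. ring.
  - intros i hi. rewrite hh by exact hi. ring.
Qed.

Lemma ip_ones_self : ip ones ones = INR N.
Proof.
  unfold ones at 1. rewrite ip_lincomb_terms, (sum_lt_ext _ (fun _ => 1)).
  - rewrite sum_lt_const. ring.
  - intros i hi. rewrite ip_sym, ip_ones_basis by exact hi. ring.
Qed.

Lemma ip_residual_along_ones_le k h : (k < N)%nat -> ortho_dict h ->
  ip (residual_along ones e k) h <= 1.
Proof.
  intros hk [[i [hi [-> | ->]]] | [_ hperp]].
  - rewrite (ip_residual_along_basis ones e N k he), ip_ones_basis by lia.
    destruct (Nat.ltb i k); lra.
  - rewrite ip_oppr, (ip_residual_along_basis ones e N k he), ip_ones_basis by lia.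
    destruct (Nat.ltb i k); lra.
  - rewrite ip_residual_along_perp, ip_ones_perp by (intros; apply hperp; lia). lra.
Qed.

Lemma ip_residual_along_ones_basis k : (k < N)%nat -> ip (residual_along ones e k) (e k) = 1.
Proof.
  intros hk. rewrite (ip_residual_along_basis ones e N k he), ip_ones_basis by lia.
  destruct (Nat.ltb_spec k k); [lia | reflexivity].
Qed.

Lemma A1_scales_ones : (0 < N)%nat -> A1_scales ip ortho_dict ones (INR N).
Proof.
  intros hN. pose proof (lt_0_INR N hN). split; [lra |].
  intros eps heps. exists (scal (/ INR N) ones). split.
  - exists (terms (fun _ => / INR N * 1) e N). split; [| split].
    + apply Forall_terms. intros i hi. split.
      * simpl. apply Rlt_le. rewrite Rmult_1_r. apply Rinv_0_lt_compat. lra.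
      * left. exists i. auto.
    + rewrite fold_weights_terms, sum_lt_const. field. lra.
    + apply scal_lincomb_terms.
  - rewrite hnorm_minus_self. exact heps.
Qed.

Lemma A1_norm_ones : (0 < N)%nat -> A1_norm ip ortho_dict ones = INR N.
Proof.
  intros hN. pose proof (A1_scales_ones hN) as hsc.
  apply Rle_antisym; [exact (A1_norm_le _ _ _ hsc) |].
  rewrite <- ip_ones_self, <- (Rmult_1_l (A1_norm ip ortho_dict ones)).
  apply ip_le_A1_norm; [exists (INR N); exact hsc | lra |].
  intros h hh. exact (ip_residual_along_ones_le 0 h hN hh).
Qed.

Lemma pga_realization_ones m : (m <= N)%nat ->
  pga_realization ip m ortho_dict ones e (residual_along ones e).
Proof.
  intros hm. split; [reflexivity |]. intros k hk. split; [| split].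
  - left. exists k. split; [lia | auto].
  - intros h hh. rewrite ip_residual_along_ones_basis by lia.
    apply ip_residual_along_ones_le; [lia | exact hh].
  - reflexivity.
Qed.

End OrthonormalDictionary.

Lemma gamma_le_Rpower m alpha : (0 < m)%nat -> 0 <= alpha <= 1 / 3 ->
  Rbar_le (gamma ip m alpha) (Rpower (INR m) (- alpha / 2)).
Proof.
  intros hm halpha. apply (proj2 (Lub_Rbar_correct _)).
  intros x [D [f [g [fs [hD [_ [hfin [hpga ->]]]]]]]].
  exact (pga_ratio_le D f g fs m hD hfin hpga alpha hm halpha).
Qed.

Lemma half_Rpower_le_gamma m alpha : @infinite_dim H -> (0 < m)%nat -> alpha <= 1 ->
  Rbar_le (1 / 2 * Rpower (INR m) (- alpha / 2)) (gamma ip m alpha).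
Proof.
  intros hinf hm halpha.
  (* with [N = 2m]: [||f_m||^2 = m] and [||f||^2 = ||f||_A1 = 2m] *)
  destruct (orthonormal_exists hinf (2 * m)) as [e he].
  set (N := (2 * m)%nat) in *.
  assert (hmN : (m <= N)%nat) by (unfold N; lia).
  assert (hN0 : (0 < N)%nat) by (unfold N; lia).
  assert (hN : INR N = 2 * INR m) by (unfold N; rewrite mult_INR; reflexivity).
  assert (hmR : 0 < INR m) by (apply lt_0_INR, hm).
  assert (hff : ip (ones e N) (ones e N) = 2 * INR m) by (rewrite ip_ones_self; assumption).
  assert (hres : ip (residual_along (ones e N) e m) (residual_along (ones e N) e m) = INR m).
  { rewrite (ip_residual_along_self _ e N m he hmN), hff; [ring |].
    intros i hi. apply ip_ones_basis; [exact he | lia]. }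
  assert (hB : A1_norm ip (ortho_dict e N) (ones e N) = 2 * INR m).
  { rewrite (A1_norm_ones e N he hN0). exact hN. }
  assert (hdict := ortho_dict_dictionary e N he).
  assert (hf0 : ones e N <> zero) by (intros hz; rewrite hz, ip_zerol in hff; lra).
  assert (hfin : A1_finite ip (ortho_dict e N) (ones e N))
    by (exists (INR N); exact (A1_scales_ones e N hN0)).
  assert (hpga := pga_realization_ones e N he m hmN).
  eapply Rbar_le_trans; [| apply (proj1 (Lub_Rbar_correct _));
    exists (ortho_dict e N), (ones e N), e, (residual_along (ones e N) e);
    exact (conj hdict (conj hf0 (conj hfin (conj hpga eq_refl))))].
  simpl. unfold hnorm. rewrite hres, hff, hB.
  apply half_Rpower_le_sqrt_ratio; assumption.
Qed.

End InnerProductSpace.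

Theorem mainTheorem3 (H : ModuleSpace R_Ring) (ip : H -> H -> R) :
  inf_dim_hilbert ip ->
  forall (m : nat) (alpha : R),
    (1 <= m)%nat -> 0 < alpha -> alpha <= 1 / 3 ->
    Rbar_le (Finite (1 / 2 * Rpower (INR m) (- alpha / 2))) (gamma ip m alpha) /\
    Rbar_le (gamma ip m alpha) (Finite (Rpower (INR m) (- alpha / 2))).
Proof.
  intros [Hip [_ Hinf]] m alpha hm halpha0 halpha1. split.
  - apply (half_Rpower_le_gamma ip Hip); [exact Hinf | lia | lra].
  - apply (gamma_le_Rpower ip Hip); [lia | lra].
Qed.
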